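(* Let $H$ be a homogeneous relation on a finite set $V$ with $|V|\ge 2$ and let $x\in V$. Let $P_0$ be the partition of $V\setminus\{x\}$ into the equivalence classes of $H_x$. Consider the following refinement rule applied to a partition $P$ of $V\setminus\{x\}$ with a pivot $y\in V\setminus\{x\}$: letting $C(y)$ be the class of $P$ containing $y$, replace every class $C\neq C(y)$ of $P$ by the nonempty sets among $C\cap K$, where $K$ ranges over the equivalence classes of $H_y$. Starting from $P_0$ and applying this rule with arbitrary pivots in an arbitrary order until no application of the rule changes the partition, the final partition equals $MHS(x)$, the partition of $V\setminus\{x\}$ into the inclusion-maximal homogeneous sets not containing $x$.
   Context: $V$ is a finite set. A reflectless triple is a triple $(x,y,z)\in V^3$ with $x\neq y$ and $x\neq z$, written $(x|yz)$. A homogeneous relation $H$ on $V$ is a set of reflectless triples (we write $H(s|xy)$ when $(s|xy)\in H$) such that for every $s\in V$ the binary relation $H_s=\{(x,y): H(s|xy)\}$ is an equivalence relation on $V\setminus\{s\}$. For $X\subseteq V$ and $s\notin X$, $s$ distinguishes $X$ if there are $x,y\in X$ with not $H(s|xy)$. A homogeneous set is a nonempty $M\subseteq V$ such that no element of $V\setminus M$ distinguishes $M$. The inclusion-maximal homogeneous sets not containing $x$ form a partition of $V\setminus\{x\}$, denoted $MHS(x)$. *)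

From mathcomp Require Import all_boot.
Set Implicit Arguments. Unset Strict Implicit. Unset Printing Implicit Defensive.

(* A ternary relation on V: H s a b  encodes  H(s|ab). *)
Section Defs.
Variable V : finType.
Implicit Type H : V -> V -> V -> bool.

Definition reflectless_rel H : Prop :=
  forall s a b, H s a b -> (s != a) && (s != b).

Definition equiv_on (D : {set V}) (r : rel V) : Prop :=
  [/\ {in D, forall a, r a a},
      {in D &, forall a b, r a b -> r b a} &
      {in D & &, forall a b c, r a b -> r b c -> r a c}].

Definition homogeneous_rel H : Prop :=
  reflectless_rel H /\ forall s, equiv_on [set~ s] (H s).

Definition distinguishes H (s : V) (X : {set V}) : bool :=
  [exists a in X, exists b in X, ~~ H s a b].

Definition homogeneous_set H (M : {set V}) : bool :=
  (M != set0) && [forall s in ~: M, ~~ distinguishes H s M].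

Definition MHS H (x : V) : {set {set V}} :=
  [set M | maxset (fun M : {set V} => homogeneous_set H M && (x \notin M)) M].

Definition Hclasses H (s : V) : {set {set V}} :=
  equivalence_partition (H s) [set~ s].

Definition refine_step H (P : {set {set V}}) (y : V) : {set {set V}} :=
  \bigcup_(C in P)
    (if y \in C then [set C]
     else [set C :&: K | K in Hclasses H y] :\ set0).

End Defs.

From mathcomp Require Import all_boot.
Set Implicit Arguments. Unset Strict Implicit. Unset Printing Implicit Defensive.

(* The refinement keeps P a family of disjoint nonempty sets avoiding x, each
   inside one H_x-class, such that every homogeneous set avoiding x lies inside
   a block: a homogeneous M with pivot y outside M lies inside a single
   H_y-class, so it survives every split.  Once no pivot y <> x changes P, no
   y outside a block C splits C (and x does not split it either, C lying in
   one H_x-class), so every block is homogeneous; with the covering property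
   the blocks are exactly the maximal homogeneous sets avoiding x. *)

Section Refinement.

Variables (V : finType) (H : V -> V -> V -> bool).
Hypothesis hH : homogeneous_rel H.

Lemma homogeneous_refl s a : a != s -> H s a a.
Proof. by case: hH => _ /(_ s) [r _ _] ha; apply: r; rewrite in_setC1. Qed.

Lemma homogeneous_sym s a b : a != s -> b != s -> H s a b -> H s b a.
Proof. by case: hH => _ /(_ s) [_ r _] ha hb; apply: r; rewrite in_setC1. Qed.

Lemma homogeneous_trans s a b c :
  a != s -> b != s -> c != s -> H s a b -> H s b c -> H s a c.
Proof. by case: hH => _ /(_ s) [_ _ r] ha hb hc; apply: r; rewrite in_setC1. Qed.

Definition Hclass (s a : V) : {set V} := [set w in [set~ s] | H s a w].

Lemma mem_Hclass s a w : (w \in Hclass s a) = (w != s) && H s a w.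
Proof. by rewrite !inE. Qed.

Lemma Hclass_refl s a : a != s -> a \in Hclass s a.
Proof. by move=> ha; rewrite mem_Hclass ha homogeneous_refl. Qed.

Lemma mem_Hclasses s K : K \in Hclasses H s <-> exists2 a, a != s & K = Hclass s a.
Proof.
split; first by case/imsetP => a ha ->; exists a; rewrite -?in_setC1.
by case=> a ha ->; apply/imsetP; exists a; rewrite ?in_setC1.
Qed.

Lemma Hclass_rel s c a b : c != s -> a \in Hclass s c -> b \in Hclass s c -> H s a b.
Proof.
rewrite !mem_Hclass => hc /andP [ha hca] /andP [hb hcb].
exact: homogeneous_trans ha hc hb (homogeneous_sym hc ha hca) hcb.
Qed.

Lemma Hclass_eq s a b z :
  a != s -> b != s -> z \in Hclass s a -> z \in Hclass s b -> Hclass s a = Hclass s b.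
Proof.
move=> ha hb; rewrite !mem_Hclass => /andP [hz haz] /andP [_ hbz].
have hab : H s a b by apply: homogeneous_trans ha hz hb haz (homogeneous_sym hb hz hbz).
apply/setP => w; rewrite !mem_Hclass; case hw: (w != s) => //=; apply/idP/idP.
- exact: homogeneous_trans hb ha hw (homogeneous_sym ha hb hab).
- exact: homogeneous_trans ha hb hw hab.
Qed.

Lemma homogeneous_set_rel M s a b :
  homogeneous_set H M -> s \notin M -> a \in M -> b \in M -> H s a b.
Proof.
case/andP=> _ /forall_inP /(_ s); rewrite inE => hM /hM.
by rewrite negb_exists_in => /forall_inP /(_ a) h /h; rewrite negb_exists_in
  => /forall_inP /(_ b) h' /h'; rewrite negbK.
Qed.

Lemma homogeneous_sub_Hclass M s a :
  homogeneous_set H M -> s \notin M -> a \in M -> M \subset Hclass s a.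
Proof.
move=> hM hs ha; apply/subsetP => b hb; rewrite mem_Hclass.
rewrite (homogeneous_set_rel hM hs ha hb) andbT.
by apply: contraNneq hs => <-.
Qed.

Lemma mem_refine_step P y D :
  D \in refine_step H P y <->
  exists2 C, C \in P &
    if y \in C then D = C else D != set0 /\ exists2 a, a != y & D = C :&: Hclass y a.
Proof.
split.
- case/bigcupP => C hC hD; exists C => //; move: hD; case: ifP => _.
    by rewrite inE => /eqP.
  by rewrite in_setD1 => /andP [-> /imsetP [K /mem_Hclasses [a ha ->] ->]]; split; last exists a.
- case=> C hC hD; apply/bigcupP; exists C => //; move: hD; case: ifP => _.
    by move=> ->; rewrite inE.
  case=> hn [a ha eD]; rewrite in_setD1 hn; apply/imsetP; exists (Hclass y a) => //.
  by apply/mem_Hclasses; exists a.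
Qed.

Lemma refine_step_sub P y D : D \in refine_step H P y -> exists2 C, C \in P & D \subset C.
Proof.
case/mem_refine_step => C hC hD; exists C => //; move: hD; case: ifP => _.
  by move=> ->.
by case=> _ [a _ ->]; apply: subsetIl.
Qed.

Lemma refine_step_keep (P : {set {set V}}) y C : C \in P -> y \in C -> C \in refine_step H P y.
Proof. by move=> hC hy; apply/mem_refine_step; exists C; rewrite ?hy. Qed.

Lemma refine_step_split (P : {set {set V}}) y C a :
  C \in P -> y \notin C -> a \in C -> a != y -> C :&: Hclass y a \in refine_step H P y.
Proof.
move=> hC hy haC ha; apply/mem_refine_step; exists C; rewrite ?(negbTE hy) //.
split; last by exists a.
by apply/set0Pn; exists a; rewrite inE haC Hclass_refl.
Qed.

Definition nonoverlapping (P : {set {set V}}) : Prop :=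
  forall C D z, C \in P -> D \in P -> z \in C -> z \in D -> C = D.

Lemma refine_step_block P y D C z :
  nonoverlapping P -> D \in refine_step H P y -> C \in P -> z \in D -> z \in C ->
  D = if y \in C then C else C :&: Hclass y z.
Proof.
move=> hP /mem_refine_step [C' hC' hD] hC zD zC.
have eC' : C' = C.
  apply: (hP _ _ z hC' hC) zC; move: hD; case: ifP => _; first by move=> <-.
  by case=> _ [a _ eD]; move: zD; rewrite eD inE => /andP [].
move: hD; rewrite eC'; case: ifP => _ // [_ [a ha eD]].
move: zD; rewrite eD inE => /andP [_ za].
have zy : z != y by move: za; rewrite mem_Hclass => /andP [].
by rewrite (Hclass_eq ha zy za (Hclass_refl zy)).
Qed.

Definition MHS_coarsening (x : V) (P : {set {set V}}) : Prop :=
  [/\ forall C, C \in P -> C != set0,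
      forall C, C \in P -> x \notin C,
      forall C, C \in P -> forall a b, a \in C -> b \in C -> H x a b,
      nonoverlapping P &
      forall M, homogeneous_set H M -> x \notin M -> exists2 C, C \in P & M \subset C].

Lemma MHS_coarsening_Hclasses x : MHS_coarsening x (Hclasses H x).
Proof.
split.
- by move=> C /mem_Hclasses [a ha ->]; apply/set0Pn; exists a; apply: Hclass_refl.
- by move=> C /mem_Hclasses [a ha ->]; rewrite mem_Hclass eqxx.
- by move=> C /mem_Hclasses [c hc ->] a b; apply: Hclass_rel.
- move=> C D z /mem_Hclasses [a ha ->] /mem_Hclasses [b hb ->].
  exact: Hclass_eq.
- move=> M hM hxM; have /andP [/set0Pn [a haM] _] := hM.
  have hax : a != x by apply: contraNneq hxM => <-.
  exists (Hclass x a); first by apply/mem_Hclasses; exists a.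
  exact: homogeneous_sub_Hclass.
Qed.

Lemma MHS_coarsening_refine_step x P y :
  MHS_coarsening x P -> MHS_coarsening x (refine_step H P y).
Proof.
case=> hne hx hrel hP hcov; split.
- move=> D /mem_refine_step [C hC]; case: ifP => _; first by move=> ->; apply: hne.
  by case.
- by move=> D /refine_step_sub [C hC /subsetP DC]; apply: contra (hx C hC); apply: DC.
- by move=> D /refine_step_sub [C hC /subsetP DC] a b /DC ha /DC hb; apply: hrel hC a b ha hb.
- move=> D1 D2 z hD1 hD2 z1 z2.
  have [C hC /subsetP /(_ z z1) zC] := refine_step_sub hD1.
  by rewrite (refine_step_block hP hD1 hC z1 zC) (refine_step_block hP hD2 hC z2 zC).
- move=> M hM hxM; have [C hC sMC] := hcov M hM hxM.
  have [hyC | hyC] := boolP (y \in C); first by exists C; rewrite ?refine_step_keep.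
  have hyM : y \notin M by apply: contra hyC; apply: (subsetP sMC).
  have /andP [/set0Pn [a haM] _] := hM.
  have hay : a != y by apply: contraNneq hyM => <-.
  exists (C :&: Hclass y a); first exact: refine_step_split (subsetP sMC a haM) hay.
  by rewrite subsetI sMC homogeneous_sub_Hclass.
Qed.

Lemma MHS_coarsening_foldl x P pivots :
  MHS_coarsening x P -> MHS_coarsening x (foldl (refine_step H) P pivots).
Proof.
elim: pivots P => //= y pivots IH P hP.
exact/IH/MHS_coarsening_refine_step.
Qed.

Section Stable.

Variables (x : V) (P : {set {set V}}).
Hypotheses (hP : MHS_coarsening x P)
           (hstab : forall y, y != x -> refine_step H P y = P).

Lemma stable_block_homogeneous C : C \in P -> homogeneous_set H C.
Proof.
case: hP => hne _ hrel hdisj _ hC; rewrite /homogeneous_set hne //=.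
apply/forall_inP => s; rewrite inE => hsC.
apply/existsP => -[a /andP [haC /exists_inP [b hbC]]]; apply/negP/negPn.
have [-> | hsx] := eqVneq s x; first exact: hrel hC a b haC hbC.
have has : a != s by apply: contraNneq hsC => <-.
have hD : C :&: Hclass s a \in P by rewrite -(hstab hsx) refine_step_split.
have eD : C :&: Hclass s a = C.
  by apply: (hdisj _ _ a hD hC) => //; rewrite inE haC Hclass_refl.
by move: hbC; rewrite -eD inE mem_Hclass => /and3P [].
Qed.

Lemma stable_MHS_coarsening_eq : P = MHS H x.
Proof.
case: hP => hne hx _ hdisj hcov.
apply/setP => M; rewrite inE; apply/idP/maxsetP.
- move=> hM; split; first by rewrite stable_block_homogeneous ?hx.
  move=> B /andP [hB hxB] sMB; have [C hC sBC] := hcov B hB hxB.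
  have /set0Pn [m hm] := hne M hM.
  have eMC : M = C by apply: (hdisj _ _ m hM hC hm); apply/(subsetP sBC)/(subsetP sMB).
  by apply/eqP; rewrite eqEsubset sMB andbT eMC.
- case=> /andP [hM hxM] hmax; have [C hC sMC] := hcov M hM hxM.
  by rewrite -(hmax C) ?stable_block_homogeneous ?hx.
Qed.

End Stable.

End Refinement.

(* The invariant holds for every pivot, x included. *)
Theorem mainTheorem10 (V : finType) (H : V -> V -> V -> bool) (x : V)
  (hH : homogeneous_rel H) (hV : 2 <= #|V|)
  (pivots : seq V) (hpiv : all (fun y => y != x) pivots) :
  let P := foldl (refine_step H) (Hclasses H x) pivots in
  (forall y : V, y != x -> refine_step H P y = P) ->
  P = MHS H x.
Proof.
move=> P hstab.
have hP : MHS_coarsening H x P.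
  exact: MHS_coarsening_foldl (MHS_coarsening_Hclasses hH x).
by apply: (stable_MHS_coarsening_eq hH hP).
Qed.
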